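(* Let $S\subseteq\{0,1\}^n$, $1\le m\le n$, $f\in[0,1/2]$, $\Delta\in(0,1)$. Suppose $T\ge 24\ln\frac1\Delta$ hash functions $h_1,\dots,h_T$ are drawn independently from $\mathcal{H}^f_{m\times n}$. Let $$U(n,m,f)=\min\left\{z\ \middle|\ \frac{1}{1+2^{2m}v(z)/z^2}\ge\frac34\right\}.$$ Let $\mathcal{A}(S,h_1,\dots,h_T)$ be the random variable equal to $U(n,m,f)$ if $\mathrm{Median}(\mathbb{I}[S(h_1)=0],\dots,\mathbb{I}[S(h_T)=0])=1$, and equal to $2^n$ otherwise. Then $\Pr\left[|S|\le\mathcal{A}(S,h_1,\dots,h_T)\right]\ge1-\Delta$.
   Context: Drawing $h$ from $\mathcal{H}^f_{m\times n}$ means $h(x)=Ax+b\bmod 2$ with $A\in\{0,1\}^{m\times n}$ having i.i.d. entries with $\Pr[A_{ij}=1]=f$ and $b\in\{0,1\}^m$ uniform and independent of $A$; $S(h)=|\{x\in S:h(x)=0\}|$. In the definition of $U$, $z$ ranges over integers $1\le z\le 2^n$ (minimum of the empty set $=+\infty$). For integer $1\le q\le 2^n+1$: $w^*(n,q)=\max\{w\ge0:\sum_{j=1}^w\binom{n}{j}\le q-1\}$, $r(n,q)=q-1-\sum_{w=1}^{w^*(n,q)}\binom{n}{w}$, $$(q-1)\,\epsilon(n,m,q,f)=\sum_{w=1}^{w^*(n,q)}\binom{n}{w}\frac{(1+(1-2f)^w)^m}{2^m}+\frac{r(n,q)}{2^m}(1+(1-2f)^{w^*(n,q)+1})^m,$$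 and $v(q)=\frac{q}{2^m}\left(1+\epsilon(n,m,q,f)(q-1)-\frac{q}{2^m}\right)$. *)

From HB Require Import structures.
From mathcomp Require Import all_boot all_order all_algebra.
From mathcomp Require Import all_classical all_reals exp.
Set Implicit Arguments. Unset Strict Implicit. Unset Printing Implicit Defensive.
Import Order.TTheory GRing.Theory Num.Theory.
Local Open Scope ring_scope.

Definition bvec (n : nat) := {ffun 'I_n -> bool}.

(* a hash function h(x) = A x + b mod 2, given by the pair (A, b) *)
Definition hashT (m n : nat) := ('M[bool]_(m, n) * {ffun 'I_m -> bool})%type.

Definition hash_app (m n : nat) (h : hashT m n) (x : bvec n) : {ffun 'I_m -> bool} :=
  [ffun i => h.2 i (+) \big[addb/false]_(j < n) (h.1 i j && x j)].

Definition cell_count (m n : nat) (S : {set bvec n}) (h : hashT m n) : nat :=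
  #|[set x in S | hash_app h x == [ffun=> false]]|.

(* probability weight of h under H^f_{m x n}: entries of A i.i.d. Bernoulli(f),
   b uniform and independent *)
Definition hash_weight (R : realType) (m n : nat) (f : R) (h : hashT m n) : R :=
  (\prod_(i < m) \prod_(j < n) (if h.1 i j then f else 1 - f)) / 2%:R ^+ m.

Definition prob_hashes (R : realType) (m n T : nat) (f : R)
    (E : pred {ffun 'I_T -> hashT m n}) : R :=
  \sum_(hs : {ffun 'I_T -> hashT m n} | E hs) \prod_(t < T) hash_weight f (hs t).

Definition wstar (n q : nat) : nat :=
  \max_(w < n.+1 | (\sum_(1 <= j < w.+1) 'C(n, j) <= q.-1)%N) (w : nat).

Definition rr (n q : nat) : nat := (q.-1 - \sum_(1 <= w < (wstar n q).+1) 'C(n, w))%N.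

(* (q-1) * epsilon(n,m,q,f) *)
Definition eps_times (R : realType) (n m q : nat) (f : R) : R :=
  \sum_(1 <= w < (wstar n q).+1)
     'C(n, w)%:R * (1 + (1 - 2 * f) ^+ w) ^+ m / 2%:R ^+ m
  + (rr n q)%:R / 2%:R ^+ m * (1 + (1 - 2 * f) ^+ (wstar n q).+1) ^+ m.

Definition vfun (R : realType) (n m q : nat) (f : R) : R :=
  q%:R / 2%:R ^+ m * (1 + eps_times n m q f - q%:R / 2%:R ^+ m).

Definition Ucond (R : realType) (n m : nat) (f : R) (z : nat) : bool :=
  3%:R / 4%:R <= 1 / (1 + 2%:R ^+ (2 * m) * vfun n m z f / (z%:R ^+ 2)).

(* U(n,m,f) = min{1 <= z <= 2^n | Ucond z}: first element of the increasing
   list of candidates; None encodes +infinity (empty set) *)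
Definition Ubound (R : realType) (n m : nat) (f : R) : option nat :=
  ohead [seq z <- iota 1 (2 ^ n) | Ucond n m f z].

(* Median of T bits equals 1 iff strictly more than half are 1
   (usual median, averaging the two middle values when T is even) *)
Definition median_is_one (T : nat) (b : 'I_T -> bool) : bool :=
  (T < 2 * #|[set t | b t]|)%N.

Definition estimator (R : realType) (n m T : nat) (f : R) (S : {set bvec n})
    (hs : {ffun 'I_T -> hashT m n}) : option nat :=
  if median_is_one (fun t => cell_count S (hs t) == 0%N) then Ubound n m f
  else Some (2 ^ n)%N.

Definition le_opt (k : nat) (a : option nat) : bool :=
  if a is Some u then (k <= u)%N else true.

Arguments prob_hashes {R} m n T f E.
Arguments estimator {R} n m T f S hs.
Arguments hash_weight {R} m n f h.
Arguments cell_count m n S h.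

From HB Require Import structures.
From mathcomp Require Import all_boot all_order all_algebra.
From mathcomp Require Import all_classical all_reals exp.
From mathcomp Require Import ring lra zify.
Import Order.TTheory GRing.Theory Num.Theory.
Local Open Scope ring_scope.
Set Implicit Arguments. Unset Strict Implicit. Unset Printing Implicit Defensive.

(* For a nonempty S the cell count X = S(h) has mean |S|/2^m, and since two points
   x, y land together in the zero cell with probability ((1 + (1-2f)^d)/2)^m / 2^m,
   d the Hamming distance of x and y, its second moment is at most
   |S| (1 + eps(|S|)) / 2^m: at most C(n,d) points of S lie at distance d from x and
   the collision probability decreases with d, so the worst case fills the spheres
   around x greedily, which is exactly how eps is defined.  A second-moment bound
   then gives Pr[S(h) = 0] <= 1/4 as soon as U <= |S|, because (1 + eps(q))/q is
   nonincreasing in q; when U > |S| the estimate can never be too small.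
   Finally the median of T such indicators is 1 with probability at most
   (7/8)^T <= Delta, by weighting each empty cell by 4. *)

Definition binom_prefix (n w : nat) : nat := (\sum_(1 <= j < w.+1) 'C(n, j))%N.

Lemma binom_prefixS n w : binom_prefix n w.+1 = (binom_prefix n w + 'C(n, w.+1))%N.
Proof. by rewrite /binom_prefix big_nat_recr. Qed.

Lemma binom_prefix_mono n : {homo binom_prefix n : a b / (a <= b)%N}.
Proof.
move=> a b ab; rewrite /binom_prefix [X in (_ <= X)%N](big_cat_nat _ (n:=a.+1)) //=.
exact: leq_addr.
Qed.

Lemma binom_prefix_ltS n a : (a < n)%N -> (binom_prefix n a < binom_prefix n a.+1)%N.
Proof. by move=> an; rewrite binom_prefixS -[X in (X < _)%N]addn0 ltn_add2l bin_gt0. Qed.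

Lemma wstarP n q :
  [/\ (wstar n q <= n)%N, (binom_prefix n (wstar n q) <= q.-1)%N &
      ((wstar n q < n)%N -> (q.-1 < binom_prefix n (wstar n q).+1)%N)].
Proof.
have P0 : (0 < #|[pred w : 'I_n.+1 | (binom_prefix n w <= q.-1)%N]|)%N.
  by apply/card_gt0P; exists ord0; rewrite inE /binom_prefix big_geq.
have [i0 Hi0 Hmax] := eq_bigmax_cond (fun w : 'I_n.+1 => (w : nat)) P0.
have wE : wstar n q = i0 by rewrite /wstar -Hmax.
rewrite wE; split; first by rewrite -ltnS.
  by move: Hi0; rewrite inE.
move=> lt; rewrite ltnNge; apply/negP => H.
have := @leq_bigmax_cond _ (fun w : 'I_n.+1 => (binom_prefix n w <= q.-1)%N)
  (fun w : 'I_n.+1 => (w : nat)) (@Ordinal n.+1 i0.+1 lt) H.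
by rewrite -/(wstar n q) wE /= ltnn.
Qed.

Lemma wstar_unique n q w : (w <= n)%N -> (binom_prefix n w <= q.-1)%N ->
  ((w < n)%N -> (q.-1 < binom_prefix n w.+1)%N) -> wstar n q = w.
Proof.
move=> wn Hw Hw1; have [w'n Hw' Hw'1] := wstarP n q.
apply/eqP; rewrite eqn_leq; apply/andP; split; rewrite leqNgt.
- apply/negP => lt; have := Hw1 (leq_trans lt w'n); rewrite ltnNge => /negP; apply.
  exact: leq_trans (binom_prefix_mono n lt) Hw'.
- apply/negP => lt; have := Hw'1 (leq_trans lt wn); rewrite ltnNge => /negP; apply.
  exact: leq_trans (binom_prefix_mono n lt) Hw.
Qed.

Lemma binom_prefix_add_rr n q : (binom_prefix n (wstar n q) + rr n q = q.-1)%N.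
Proof. by have [_ H _] := wstarP n q; rewrite /rr -/(binom_prefix _ _) subnKC. Qed.

Section Epsilon.
Variables (R : realType) (n m : nat) (f : R).
Hypotheses (f_ge0 : 0 <= f) (f_le_half : f <= 1 / 2).

Definition collision (w : nat) : R := ((1 + (1 - 2 * f) ^+ w) / 2%:R) ^+ m.

Definition greedy_mass (w r : nat) : R :=
  \sum_(1 <= j < w.+1) 'C(n, j)%:R * collision j + r%:R * collision w.+1.

Lemma eps_timesE q : eps_times n m q f = greedy_mass (wstar n q) (rr n q).
Proof.
rewrite /eps_times /greedy_mass /collision; congr (_ + _).
  by apply: eq_bigr => j _; rewrite expr_div_n mulrA.
by rewrite expr_div_n mulrA mulrAC.
Qed.

Lemma greedy_massS w r : greedy_mass w r.+1 = greedy_mass w r + collision w.+1.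
Proof. by rewrite /greedy_mass mulrSr mulrDl mul1r addrA. Qed.

Lemma greedy_mass_next w : greedy_mass w.+1 0 = greedy_mass w 'C(n, w.+1).
Proof. by rewrite /greedy_mass big_nat_recr //= mul0r addr0. Qed.

Lemma eps_timesS q : (1 <= q)%N ->
  eps_times n m q.+1 f = eps_times n m q f + collision (wstar n q).+1.
Proof.
move=> q1; rewrite !eps_timesE -greedy_massS.
have [wn Hw Hw1] := wstarP n q; have Hsr := binom_prefix_add_rr n q.
set w := wstar n q in wn Hw Hw1 Hsr *.
have Hsr1 := binom_prefix_add_rr n q.+1.
have HwS : (binom_prefix n w <= q.+1.-1)%N by rewrite /= (leq_trans Hw) ?leq_pred.
have [wltn | nlew] := ltnP w n; last first.
  have ws1 : wstar n q.+1 = w by apply: wstar_unique => // lt; lia.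
  by rewrite ws1 in Hsr1 *; congr greedy_mass; lia.
have [qlt | qge] := ltnP q (binom_prefix n w.+1).
  have ws1 : wstar n q.+1 = w by apply: wstar_unique.
  by rewrite ws1 in Hsr1 *; congr greedy_mass; lia.
have Hw1' := Hw1 wltn; have qE : q = binom_prefix n w.+1 by lia.
have ws1 : wstar n q.+1 = w.+1.
  by apply: wstar_unique => //= lt; rewrite qE binom_prefix_ltS.
rewrite ws1 in Hsr1 *; have -> : rr n q.+1 = 0%N by lia.
rewrite greedy_mass_next; congr greedy_mass.
by have := binom_prefixS n w; lia.
Qed.

Let bias_ge0 : 0 <= 1 - 2 * f. Proof. by move: f_le_half; lra. Qed.
Let bias_le1 : 1 - 2 * f <= 1. Proof. by move: f_ge0; lra. Qed.

Lemma collision_ge0 w : 0 <= collision w.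
Proof.
have c0 := bias_ge0.
by rewrite exprn_ge0 // divr_ge0 // addr_ge0 // exprn_ge0.
Qed.

Lemma collision_le1 w : collision w <= 1.
Proof.
have c0 := bias_ge0; have c1 := bias_le1.
have h1 := exprn_ile1 w c0 c1; have h0 := exprn_ge0 w c0.
rewrite exprn_ile1 ?divr_ge0 ?addr_ge0 // ler_pdivrMr //; lra.
Qed.

Lemma collision_anti : {homo collision : j k / (j <= k)%N >-> k <= j}.
Proof.
have c0 := bias_ge0; have c1 := bias_le1.
move=> j k jk; apply: lerXn2r; rewrite ?nnegrE ?divr_ge0 ?addr_ge0 ?exprn_ge0 //.
by rewrite ler_pM2r ?invr_gt0 ?ltr0n // lerD2l ler_wiXn2l.
Qed.

Lemma collision0 : collision 0 = 1.
Proof. by rewrite /collision expr0 -[1 + 1]/(2%:R) divff ?pnatr_eq0 // expr1n. Qed.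

Lemma greedy_mass_ge w r :
  (binom_prefix n w + r)%:R * collision w.+1 <= greedy_mass w r.
Proof.
rewrite /greedy_mass natrD mulrDl lerD2r /binom_prefix natr_sum mulr_suml.
apply: ler_sum_nat => j /andP[_ jw]; apply: ler_wpM2l => //.
exact/collision_anti/ltnW.
Qed.

Lemma eps_times_ge0 q : 0 <= eps_times n m q f.
Proof.
rewrite eps_timesE; apply: le_trans (greedy_mass_ge _ _).
exact: mulr_ge0 (collision_ge0 _).
Qed.

Lemma eps_times_step q : (1 <= q)%N ->
  q%:R * (1 + eps_times n m q.+1 f) <= q.+1%:R * (1 + eps_times n m q f).
Proof.
move=> q1; rewrite eps_timesS //.
have lb := greedy_mass_ge (wstar n q) (rr n q).
rewrite binom_prefix_add_rr -eps_timesE in lb.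
have g0 := collision_ge0 (wstar n q).+1; have g1 := collision_le1 (wstar n q).+1.
have qE : q%:R = (q.-1)%:R + 1 :> R by rewrite natr1 prednK.
rewrite -natr1 qE in lb *.
set g := collision _ in lb g0 g1 *; set e := eps_times _ _ _ _ in lb *.
have a0 : 0 <= (q.-1)%:R :> R by [].
nra.
Qed.

Lemma eps_times_ratio_anti u q : (1 <= u)%N -> (u <= q)%N ->
  u%:R * (1 + eps_times n m q f) <= q%:R * (1 + eps_times n m u f).
Proof.
move=> u1 /subnKC <-; elim: (q - u)%N => [|k IH]; first by rewrite addn0.
have st := eps_times_step (leq_trans u1 (leq_addr k u)).
rewrite addnS -natr1 in st *.
have b1 : 1 <= (u + k)%:R :> R by rewrite ler1n; lia.
have a1 : 1 <= u%:R :> R by rewrite ler1n.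
have A0 := eps_times_ge0 (u + k).+1; have B0 := eps_times_ge0 (u + k).
have C0 := eps_times_ge0 u.
set a := u%:R in IH a1 *; set b := (u + k)%:R in st IH b1 *.
set A := eps_times _ _ (u + k).+1 _ in st A0 *.
set B := eps_times _ _ (u + k) _ in st IH B0.
set C := eps_times _ _ u _ in IH C0 *.
suff : b * (a * (1 + A)) <= b * ((b + 1) * (1 + C)) by rewrite ler_pM2l //; lra.
have h1 : a * (b * (1 + A)) <= a * ((b + 1) * (1 + B)) by apply: ler_wpM2l => //; lra.
have h2 : (b + 1) * (a * (1 + B)) <= (b + 1) * (b * (1 + C)) by apply: ler_wpM2l => //; lra.
nra.
Qed.

End Epsilon.

Section Threshold.
Variables (R : realType) (n m : nat) (f : R).
Hypotheses (f_ge0 : 0 <= f) (f_le_half : f <= 1 / 2).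

Lemma UcondE z : (1 <= z)%N ->
  Ucond n m f z = (3%:R * 2%:R ^+ m * (1 + eps_times n m z f) <= 4%:R * z%:R).
Proof.
move=> z1; have e0 := eps_times_ge0 n m f_ge0 f_le_half z.
have K0 : 0 < 2%:R ^+ m :> R by rewrite exprn_gt0 // ltr0n.
have z0 : 0 < z%:R :> R by rewrite ltr0n.
rewrite /Ucond /vfun mulnC exprM.
set K := 2%:R ^+ m in K0 *; set e := eps_times n m z f in e0 *; set x := z%:R in z0 *.
have -> : 1 / (1 + K ^+ 2 * (x / K * (1 + e - x / K)) / x ^+ 2) = x / (K * (1 + e)).
  have De : 0 < 1 + e by lra.
  by field; rewrite [X in _ && (X != 0)](_ : _ = (1 + e) * K) ?gt_eqF ?mulr_gt0 //; ring.
rewrite ler_pdivlMr ?mulr_gt0 //; last by lra.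
by apply/idP/idP; lra.
Qed.

Lemma Ucond_upward u q : (1 <= u)%N -> (u <= q)%N -> Ucond n m f u ->
  3%:R * 2%:R ^+ m * (1 + eps_times n m q f) <= 4%:R * q%:R.
Proof.
move=> u1 uq; rewrite UcondE // => Hu.
have := eps_times_ratio_anti n m f_ge0 f_le_half u1 uq.
have e0 := eps_times_ge0 n m f_ge0 f_le_half q.
have K0 : 0 < 2%:R ^+ m :> R by rewrite exprn_gt0 // ltr0n.
have a1 : 1 <= u%:R :> R by rewrite ler1n.
have ab : u%:R <= q%:R :> R by rewrite ler_nat.
set K := 2%:R ^+ m in K0 Hu *; set A := 1 + eps_times n m q f in e0 *.
set B := 1 + eps_times n m u f in Hu *.
set a := u%:R in a1 ab Hu *; set b := q%:R in ab * => M.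
suff : a * (3%:R * K * A) <= a * (4%:R * b) by rewrite ler_pM2l //; lra.
have h1 : a * (3%:R * K * A) <= 3%:R * K * (b * B).
  by rewrite mulrCA; apply: ler_wpM2l => //; lra.
have h2 : b * (3%:R * K * B) <= b * (4%:R * a) by apply: ler_wpM2l => //; lra.
nra.
Qed.

End Threshold.

Section BitVectors.
Variable n : nat.

Definition dotb (r d : bvec n) : bool := \big[addb/false]_j (r j && d j).
Definition addbv (x y : bvec n) : bvec n := [ffun j => x j (+) y j].
Definition hamming (d : bvec n) : nat := #|[set j | d j]|.

Lemma addbv_inj x : injective (addbv x).
Proof.
move=> y1 y2 /ffunP H; apply/ffunP => j; have := H j; rewrite !ffunE.
by case: (x j) (y1 j) (y2 j) => [] [] [].
Qed.

Lemma addbvv x : addbv x x = [ffun=> false].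
Proof. by apply/ffunP => j; rewrite !ffunE addbb. Qed.

Lemma addbv_eq0 x y : (addbv x y == [ffun=> false]) = (y == x).
Proof. by apply/eqP/eqP => [|->]; [rewrite -(addbvv x) => /addbv_inj | exact: addbvv]. Qed.

Lemma hamming_le d : (hamming d <= n)%N.
Proof. by rewrite /hamming -[X in (_ <= X)%N]card_ord max_card. Qed.

Lemma hamming_eq0 d : (hamming d == 0%N) = (d == [ffun=> false]).
Proof.
rewrite /hamming cards_eq0; apply/eqP/eqP => [H | ->].
  by apply/ffunP => j; rewrite ffunE; apply/negbTE; move/setP: H => /(_ j); rewrite !inE => ->.
by apply/setP => j; rewrite !inE ffunE.
Qed.

Lemma card_hamming_sphere (x : bvec n) (D : {set bvec n}) w :
  {in D, forall y, hamming (addbv x y) = w} -> (#|D| <= 'C(n, w))%N.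
Proof.
move=> Dw; pose supp (y : bvec n) : {set 'I_n} := [set j | addbv x y j].
have supp_inj : injective supp.
  move=> y1 y2 /setP H; apply: (@addbv_inj x); apply/ffunP => j.
  by have := H j; rewrite !inE.
rewrite -(card_imset D supp_inj) -[X in (_ <= 'C(X, _))%N]card_ord -card_draws.
apply: subset_leq_card; apply/fintype.subsetP => A /imsetP[y yD ->].
by rewrite inE -(Dw y yD).
Qed.

End BitVectors.

Section HashMoments.
Variables (R : realType) (m n : nat) (f : R).

Definition bernoulli (b : bool) : R := if b then f else 1 - f.
Definition matrix_weight (A : 'M[bool]_(m, n)) : R := \prod_i \prod_j bernoulli (A i j).
Definition rowbv (A : 'M[bool]_(m, n)) (i : 'I_m) : bvec n := [ffun j => A i j].
Definition mulmxbv (A : 'M[bool]_(m, n)) (x : bvec n) : {ffun 'I_m -> bool} :=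
  [ffun i => dotb (rowbv A i) x].

Lemma sum_mx_rows (F : 'I_m -> bvec n -> R) :
  \sum_(A : 'M[bool]_(m, n)) \prod_i F i (rowbv A i) = \prod_i \sum_(r : bvec n) F i r.
Proof.
rewrite bigA_distr_bigA /=.
pose of_rows (g : {ffun 'I_m -> bvec n}) : 'M[bool]_(m, n) := \matrix_(i, j) g i j.
rewrite (reindex of_rows); last first.
  exists (fun A => [ffun i => rowbv A i]) => [g _ | A _].
    by apply/ffunP => i; rewrite ffunE; apply/ffunP => j; rewrite ffunE mxE.
  by apply/matrixP => i j; rewrite mxE !ffunE.
apply: eq_bigr => g _; apply: eq_bigr => i _; congr F.
by apply/ffunP => j; rewrite ffunE mxE.
Qed.

Lemma sum_bvec_prod (G : 'I_n -> bool -> R) :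
  \sum_(r : bvec n) \prod_j G j (r j) = \prod_j (G j true + G j false).
Proof.
transitivity (\prod_j \sum_(b : bool) G j b); first by rewrite bigA_distr_bigA.
by apply: eq_bigr => j _; rewrite big_bool.
Qed.

Lemma sum_bernoulli_row : \sum_(r : bvec n) \prod_j bernoulli (r j) = 1.
Proof.
by rewrite (sum_bvec_prod (fun _ => bernoulli)); apply: big1 => j _; rewrite /bernoulli subrKC.
Qed.

Lemma dotb_eq0_indicator (r d : bvec n) :
  (~~ dotb r d)%:R = (1 + \prod_j (-1) ^+ (r j && d j)) / 2%:R :> R.
Proof.
have sign_morph : (-1) ^+ false = 1 :> R by [].
rewrite -(big_morph (fun b : bool => (-1) ^+ b : R) (@signr_addb R) sign_morph).
by rewrite -/(dotb r d); case: (dotb r d); rewrite /= ?expr1 ?expr0; field.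
Qed.

Lemma sum_row_dotb_eq0 (d : bvec n) :
  \sum_(r : bvec n) (\prod_j bernoulli (r j)) * (~~ dotb r d)%:R =
  (1 + (1 - 2 * f) ^+ hamming d) / 2%:R.
Proof.
under eq_bigr => r _ do rewrite dotb_eq0_indicator mulrA mulrDr mulr1.
rewrite -mulr_suml big_split /= sum_bernoulli_row.
congr ((1 + _) / _); under eq_bigr => r _ do rewrite -big_split /=.
rewrite (sum_bvec_prod (fun j b => bernoulli b * (-1) ^+ (b && d j))).
have -> : (1 - 2 * f) ^+ hamming d = \prod_j (if d j then 1 - 2 * f else 1).
  by rewrite -big_mkcond /= prodr_const /hamming cardsE.
by apply: eq_bigr => j _; rewrite /bernoulli; case: (d j); rewrite /= ?expr1 ?expr0; ring.
Qed.

Lemma matrix_weightE A : matrix_weight A = \prod_i \prod_j bernoulli (rowbv A i j).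
Proof. by apply: eq_bigr => i _; apply: eq_bigr => j _; rewrite ffunE. Qed.

Lemma sum_matrix_weight : \sum_A matrix_weight A = 1.
Proof.
under eq_bigr => A _ do rewrite matrix_weightE.
rewrite (sum_mx_rows (fun _ r => \prod_j bernoulli (r j))).
by apply: big1 => i _; rewrite sum_bernoulli_row.
Qed.

Lemma mulmxbv_eq0_indicator A d :
  (mulmxbv A d == [ffun=> false])%:R = \prod_i (~~ dotb (rowbv A i) d)%:R :> R.
Proof.
have [H | H] := eqVneq (mulmxbv A d) [ffun=> false].
  by rewrite big1 // => i _; move/ffunP: H => /(_ i); rewrite !ffunE => ->.
have [i Hi] : exists i, dotb (rowbv A i) d.
  apply/existsP; apply: contraNT H; rewrite negb_exists => /forallP Hi.
  by apply/eqP/ffunP => i; rewrite !ffunE; exact/negbTE/Hi.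
by rewrite (bigD1 i) //= Hi mul0r.
Qed.

Lemma sum_matrix_weight_kernel d :
  \sum_A matrix_weight A * (mulmxbv A d == [ffun=> false])%:R = collision m f (hamming d).
Proof.
under eq_bigr => A _ do rewrite matrix_weightE mulmxbv_eq0_indicator -big_split /=.
rewrite (sum_mx_rows (fun _ r => \prod_j bernoulli (r j) * (~~ dotb r d)%:R)).
by under eq_bigr => i _ do rewrite sum_row_dotb_eq0; rewrite prodr_const card_ord.
Qed.

End HashMoments.

Section HashFamily.
Variables (R : realType) (m n : nat) (f : R).

Lemma hash_weight_ge0 : 0 <= f -> f <= 1 / 2 -> forall h, 0 <= hash_weight m n f h.
Proof.
move=> f0 f12 h; rewrite divr_ge0 ?exprn_ge0 //.
by do 2!apply: prodr_ge0 => ? _; rewrite /bernoulli; case: ifP => _; lra.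
Qed.

Lemma sum_hashT (F : hashT m n -> R) :
  \sum_h F h = \sum_(A : 'M[bool]_(m, n)) \sum_(b : {ffun 'I_m -> bool}) F (A, b).
Proof. by rewrite pair_bigA; apply: eq_bigr => -[]. Qed.

Lemma hash_app_eq0 (h : hashT m n) (x : bvec n) :
  (hash_app h x == [ffun=> false]) = (h.2 == mulmxbv h.1 x).
Proof.
have dotE i : \big[addb/false]_(j < n) (h.1 i j && x j) = dotb (rowbv h.1 i) x.
  by apply: eq_bigr => j _; rewrite ffunE.
apply/eqP/eqP => /ffunP H; apply/ffunP => i; have := H i; rewrite !ffunE dotE.
  by case: (h.2 i); case: dotb.
by move=> ->; case: dotb.
Qed.

Lemma mulmxbv_addbv_eq0 (A : 'M[bool]_(m, n)) (x y : bvec n) :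
  (mulmxbv A (addbv x y) == [ffun=> false]) = (mulmxbv A x == mulmxbv A y).
Proof.
have E i : mulmxbv A (addbv x y) i = mulmxbv A x i (+) mulmxbv A y i.
  rewrite !ffunE /dotb -big_split /=; apply: eq_bigr => j _.
  by rewrite !ffunE; case: (A i j); case: (x j); case: (y j).
have F0 i : [ffun=> false] i = false :> bool by rewrite ffunE.
apply/eqP/eqP => /ffunP H; apply/ffunP => i; have := H i; rewrite E F0.
  by case: (mulmxbv A x i); case: (mulmxbv A y i).
by move=> ->; rewrite addbb.
Qed.

Lemma sum_eq_indicator (c : {ffun 'I_m -> bool}) : \sum_b (b == c)%:R = 1 :> R.
Proof. by rewrite (bigD1 c) //= eqxx big1 ?addr0 // => b /negbTE ->. Qed.

Lemma hash_weightE (h : hashT m n) : hash_weight m n f h = matrix_weight f h.1 / 2%:R ^+ m.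
Proof. by []. Qed.

Lemma sum_hash_weight : \sum_h hash_weight m n f h = 1.
Proof.
rewrite sum_hashT /hash_weight /=.
under eq_bigr => A _ do rewrite sumr_const card_ffun card_bool card_ord.
have K x : x / 2%:R ^+ m *+ (2 ^ m) = x :> R.
  by rewrite -mulr_natr natrX mulfVK // expf_neq0 // pnatr_eq0.
by under eq_bigr => A _ do rewrite K; exact: sum_matrix_weight.
Qed.

Lemma prob_hash_eq0 (x : bvec n) :
  \sum_h hash_weight m n f h * (hash_app h x == [ffun=> false])%:R = 1 / 2%:R ^+ m.
Proof.
rewrite sum_hashT; under eq_bigr => A _ do under eq_bigr => b _ do rewrite hash_weightE hash_app_eq0 /=.
under eq_bigr => A _ do rewrite -mulr_sumr sum_eq_indicator mulr1.
by rewrite -mulr_suml sum_matrix_weight.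
Qed.

Lemma prob_hash_eq0_pair (x y : bvec n) :
  \sum_h hash_weight m n f h *
     ((hash_app h x == [ffun=> false]) && (hash_app h y == [ffun=> false]))%:R =
  collision m f (hamming (addbv x y)) / 2%:R ^+ m.
Proof.
rewrite sum_hashT -sum_matrix_weight_kernel mulr_suml.
apply: eq_bigr => A _.
have both_eq0 b : (b == mulmxbv A x) && (b == mulmxbv A y) =
    (b == mulmxbv A x) && (mulmxbv A (addbv x y) == [ffun=> false]).
  by rewrite mulmxbv_addbv_eq0; case: eqP => // ->.
under eq_bigr => b _ do rewrite hash_weightE !hash_app_eq0 /= both_eq0 -mulnb natrM mulrA.
by rewrite -mulr_suml -mulr_sumr sum_eq_indicator mulr1 mulrAC.
Qed.

End HashFamily.

Lemma sum_nat_truncate (V : nmodType) (F : nat -> V) W N : (W <= N)%N ->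
  \sum_(1 <= w < N.+1) (if (w <= W)%N then F w else 0) = \sum_(1 <= w < W.+1) F w.
Proof.
move=> WN; rewrite (big_cat_nat _ (n := W.+1)) //= [X in _ + X]big1_seq ?addr0.
  by apply: eq_big_nat => w /andP[_ wW]; rewrite -ltnS wW.
by move=> w; rewrite /= mem_index_iota => /andP[Ww _]; case: leqP => // ?; lia.
Qed.

(* Filling the weights of [G] greedily from small [w] upward maximises the sum,
   since [G] is nonincreasing. *)
Lemma greedy_sum_bound (R : realFieldType) (G : nat -> R) (a c : nat -> nat) N W r :
  {homo G : j k / (j <= k)%N >-> k <= j} ->
  (forall w, (a w <= c w)%N) -> (W <= N)%N ->
  (\sum_(1 <= w < N.+1) a w = \sum_(1 <= w < W.+1) c w + r)%N ->
  \sum_(1 <= w < N.+1) (a w)%:R * G w <=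
  \sum_(1 <= w < W.+1) (c w)%:R * G w + r%:R * G W.+1.
Proof.
move=> G_anti ac WN Hsum.
pose cW w := if (w <= W)%N then c w else 0%N.
have pt w : (a w)%:R * G w <= (cW w)%:R * G w + ((a w)%:R - (cW w)%:R) * G W.+1.
  rewrite /cW; case: (leqP w W) => wW.
    have h1 := G_anti _ _ (leq_trans wW (leqnSn W)).
    have h2 : (a w)%:R <= (c w)%:R :> R by rewrite ler_nat.
    nra.
  have h1 := G_anti _ _ wW; have h2 : 0 <= (a w)%:R :> R by [].
  rewrite mul0r add0r subr0; nra.
apply: le_trans (ler_sum_nat (fun w _ => pt w)) _.
rewrite big_split /= -mulr_suml sumrB -!natr_sum.
have -> : \sum_(1 <= w < N.+1) (cW w)%:R * G w = \sum_(1 <= w < W.+1) (c w)%:R * G w.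
  rewrite -(sum_nat_truncate (fun w => (c w)%:R * G w) WN).
  by apply: eq_bigr => w _; rewrite /cW; case: ifP; rewrite ?mul0r.
rewrite (sum_nat_truncate c WN) Hsum natrD.
by rewrite [_ + r%:R]addrC addrK.
Qed.

Section CellCount.
Variables (R : realType) (n m : nat) (f : R) (S : {set bvec n}).
Hypotheses (f_ge0 : 0 <= f) (f_le_half : f <= 1 / 2).

Lemma card_setI_pred_natr (P : pred (bvec n)) :
  #|[set y in S | P y]|%:R = \sum_(y in S) (P y)%:R :> R.
Proof.
rewrite -sum1_card natr_sum (eq_bigl (fun y => (y \in S) && P y)) => [|y]; last by rewrite inE.
by rewrite big_mkcondr /=; apply: eq_bigr => y _; case: (P y).
Qed.

Lemma sum_split_hamming (F : nat -> R) (x : bvec n) (P : pred (bvec n)) :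
  \sum_(y in S | P y) F (hamming (addbv x y)) =
  \sum_(0 <= w < n.+1) #|[set y in S | P y && (hamming (addbv x y) == w)]|%:R * F w.
Proof.
have split_w y : F (hamming (addbv x y)) =
    \sum_(0 <= w < n.+1) (hamming (addbv x y) == w)%:R * F w.
  have lt : (hamming (addbv x y) < n.+1)%N by rewrite ltnS hamming_le.
  rewrite big_mkord (bigD1 (Ordinal lt)) //= eqxx mul1r big1 ?addr0 // => i.
  have [E|] := eqVneq (hamming (addbv x y)) i; last by rewrite mul0r.
  by case/eqP; apply: val_inj; rewrite /= E.
under eq_bigr => y _ do rewrite split_w.
rewrite exchange_big /=; apply: eq_bigr => w _.
rewrite card_setI_pred_natr mulr_suml big_mkcondr /=; apply: eq_bigr => y _.
by case: (P y); rewrite ?mul0r.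
Qed.

Lemma sum_collision_le x : x \in S ->
  \sum_(y in S) collision m f (hamming (addbv x y)) <= 1 + eps_times n m #|S| f.
Proof.
move=> xS; rewrite (bigD1 x xS) /=.
have -> : hamming (addbv x x) = 0%N by apply/eqP; rewrite hamming_eq0 addbv_eq0.
rewrite collision0 lerD2l sum_split_hamming.
pose a w := #|[set y in S | (y != x) && (hamming (addbv x y) == w)]|.
rewrite -[X in X <= _]/(\sum_(0 <= w < n.+1) (a w)%:R * _).
have a0 : a 0%N = 0%N.
  apply/eqP; rewrite cards_eq0; apply/eqP/setP => y.
  by rewrite !inE hamming_eq0 addbv_eq0; case: (y == x); rewrite ?andbF.
have card_a : #|S|.-1 = (\sum_(1 <= w < n.+1) a w)%N.
  have := sum_split_hamming (fun _ => 1) x (fun y => y != x).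
  under [in X in _ = X -> _]eq_bigr => w _ do rewrite mulr1.
  rewrite sumr_const -natr_sum => /eqP; rewrite eqr_nat big_ltn // -/(a 0%N) a0 add0n => /eqP <-.
  by rewrite (cardD1 x S) xS; apply: eq_card => y; rewrite !inE andbC.
rewrite big_ltn // a0 mul0r add0r eps_timesE.
have [wn _ _] := wstarP n #|S|.
apply: greedy_sum_bound => //; first exact: collision_anti.
- by move=> w; rewrite /a; apply: (@card_hamming_sphere n x) => y; rewrite inE => /andP[_ /andP[_ /eqP]].
- by rewrite -card_a -/(binom_prefix _ _) binom_prefix_add_rr.
Qed.

Lemma cell_countE (h : hashT m n) :
  (cell_count S h)%:R = \sum_(x in S) (hash_app h x == [ffun=> false])%:R :> R.
Proof. exact: card_setI_pred_natr. Qed.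

Lemma cell_count_mean :
  \sum_h hash_weight m n f h * (cell_count S h)%:R = #|S|%:R / 2%:R ^+ m.
Proof.
under eq_bigr => h _ do rewrite cell_countE mulr_sumr.
rewrite exchange_big /=; under eq_bigr => x _ do rewrite prob_hash_eq0.
by rewrite sumr_const div1r mulr_natl.
Qed.

Lemma cell_count_second_moment :
  \sum_h hash_weight m n f h * (cell_count S h)%:R ^+ 2 <=
  #|S|%:R * (1 + eps_times n m #|S| f) / 2%:R ^+ m.
Proof.
have sq h : hash_weight m n f h * (cell_count S h)%:R ^+ 2 = \sum_(x in S) \sum_(y in S)
    hash_weight m n f h * ((hash_app h x == [ffun=> false]) && (hash_app h y == [ffun=> false]))%:R.
  rewrite expr2 cell_countE mulr_suml mulr_sumr; apply: eq_bigr => x _.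
  by rewrite mulr_sumr mulr_sumr; apply: eq_bigr => y _; rewrite -natrM mulnb.
under eq_bigr => h _ do rewrite sq.
rewrite exchange_big /=; under eq_bigr => x _ do rewrite exchange_big /=.
under eq_bigr => x _ do under eq_bigr => y _ do rewrite prob_hash_eq0_pair.
under eq_bigr => x _ do rewrite -mulr_suml.
rewrite -mulr_suml ler_wpM2r ?invr_ge0 ?exprn_ge0 // mulr_natl -sumr_const.
by apply: ler_sum => x; exact: sum_collision_le.
Qed.

End CellCount.

Lemma prob_eq0_le_quadratic (R : realFieldType) (I : finType) (p : I -> R) (X : I -> nat) (a : R) :
  (forall i, 0 <= p i) -> \sum_i p i = 1 ->
  \sum_i p i * (X i == 0%N)%:R <=
  1 - 2%:R * a * (\sum_i p i * (X i)%:R) + a ^+ 2 * (\sum_i p i * (X i)%:R ^+ 2).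
Proof.
move=> p0 p1.
have -> : 1 - 2%:R * a * (\sum_i p i * (X i)%:R) + a ^+ 2 * (\sum_i p i * (X i)%:R ^+ 2) =
    \sum_i p i * (1 - a * (X i)%:R) ^+ 2.
  rewrite -[X in X - _ + _ = _]p1 !mulr_sumr -sumrB -big_split /=.
  by apply: eq_bigr => i _; ring.
apply: ler_sum => i _; apply: ler_wpM2l => //.
by case: eqP => [->|_]; rewrite ?mulr0 ?subr0 ?expr1n ?sqr_ge0.
Qed.

Lemma prob_empty_cell_le (R : realType) (n m : nat) (f : R) (S : {set bvec n}) :
  0 <= f -> f <= 1 / 2 -> (1 <= #|S|)%N ->
  3%:R * 2%:R ^+ m * (1 + eps_times n m #|S| f) <= 4%:R * #|S|%:R ->
  \sum_h hash_weight m n f h * (cell_count S h == 0%N)%:R <= 1 / 4%:R.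
Proof.
move=> f0 f12 S1 HS.
have e0 := eps_times_ge0 n m f0 f12 #|S|.
have K0 : 0 < 2%:R ^+ m :> R by rewrite exprn_gt0 // ltr0n.
have q0 : 0 < #|S|%:R :> R by rewrite ltr0n.
have M2 := cell_count_second_moment m S f0 f12.
set K := 2%:R ^+ m in K0 HS M2 *; set e := 1 + eps_times _ _ _ _ in HS M2 *.
set q := #|S|%:R in q0 HS M2 *.
(* [1 / e] minimises the quadratic bound once the second moment is replaced by its estimate. *)
have := prob_eq0_le_quadratic (cell_count S) (e^-1) (hash_weight_ge0 f0 f12) (sum_hash_weight m n f).
rewrite cell_count_mean -/K -/q => Hq; apply: le_trans Hq _.
have e1 : 1 <= e by rewrite /e; lra.
have ei0 : 0 <= e^-1 by rewrite invr_ge0; lra.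
set t := e^-1 * (q / K).
have Ht : 3%:R / 4%:R <= t.
  have -> : t = q / (K * e) by rewrite /t; field; rewrite !gt_eqF //; lra.
  rewrite ler_pdivlMr ?mulr_gt0 //; last by lra.
  by move: HS; rewrite -mulrA; lra.
have Ha2 : e^-1 ^+ 2 * (\sum_h hash_weight m n f h * (cell_count S h)%:R ^+ 2) <= t.
  have -> : t = e^-1 ^+ 2 * (q * e / K) by rewrite /t; field; rewrite !gt_eqF //; lra.
  by rewrite ler_wpM2l ?exprn_ge0.
have -> : 2%:R * e^-1 * (q / K) = 2%:R * t by rewrite /t mulrA.
lra.
Qed.

Lemma sum_prod_trials (R : comSemiRingType) (I : finType) (T : nat) (F : I -> R) :
  \sum_(xs : {ffun 'I_T -> I}) \prod_t F (xs t) = (\sum_i F i) ^+ T.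
Proof.
rewrite -[in RHS](card_ord T) -prodr_const.
by rewrite (bigA_distr_bigA (fun (_ : 'I_T) i => F i)).
Qed.

Section IndependentTrials.
Variables (R : realFieldType) (I : finType) (p : I -> R) (T : nat).
Hypotheses (p_ge0 : forall i, 0 <= p i) (p_sum1 : \sum_i p i = 1).

(* Weighting each success by 4 = 2^2 and dividing by 2^T dominates the indicator
   of a strict majority of successes (a Chernoff-type moment bound). *)
Lemma prob_majority_le (E : pred I) :
  \sum_i p i * (E i)%:R <= 1 / 4%:R ->
  \sum_(xs : {ffun 'I_T -> I} | (T < 2 * #|[set t | E (xs t)]|)%N) \prod_t p (xs t)
    <= (7%:R / 8%:R) ^+ T.
Proof.
move=> pE; pose c i : R := if E i then 4%:R else 1.
have c_ge0 i : 0 <= c i by rewrite /c; case: ifP.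
have w_ge0 xs : 0 <= \prod_(t < T) p (xs t) by apply: prodr_ge0.
have K0 : 0 < 2%:R ^+ T :> R by rewrite exprn_gt0 // ltr0n.
apply: le_trans (_ : _ <= \sum_(xs : {ffun 'I_T -> I}) \prod_t (p (xs t) * c (xs t)) / 2%:R ^+ T) _.
  rewrite [X in X <= _]big_mkcond /=; apply: ler_sum => xs _.
  rewrite big_split /= -mulrA; case: ifP => maj; last first.
    by rewrite mulr_ge0 ?divr_ge0 ?prodr_ge0 ?ltW.
  rewrite -[X in X <= _]mulr1 ler_wpM2l // ler_pdivlMr // mul1r.
  rewrite /c -big_mkcond /= prodr_const -cardsE.
  have -> : 4%:R = 2%:R ^+ 2 :> R by rewrite -natrX.
  by rewrite -exprM ler_weXn2l ?ler1n // ltnW.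
rewrite -mulr_suml (sum_prod_trials T (fun i => p i * c i)) -expr_div_n; apply: lerXn2r.
- by rewrite nnegrE divr_ge0 ?sumr_ge0 // => i _; rewrite mulr_ge0.
- by rewrite nnegrE; lra.
have -> : \sum_i p i * c i = \sum_i p i + 3%:R * \sum_i p i * (E i)%:R.
  rewrite mulr_sumr -big_split /=; apply: eq_bigr => i _.
  by rewrite /c; case: (E i); rewrite /= ?mulr1 ?mulr0 ?addr0 //; ring.
by rewrite p_sum1 ler_pdivrMr ?ltr0n //; lra.
Qed.

End IndependentTrials.

Lemma seven_eighths_pow_le (R : realType) (T : nat) (Delta : R) : 0 < Delta ->
  24%:R * ln (1 / Delta) <= T%:R -> (7%:R / 8%:R) ^+ T <= Delta.
Proof.
move=> D0 HT.
have h1 : 7%:R / 8%:R <= sequences.expR (- (1 / 24%:R)) :> R by apply: le_trans (expR_ge1Dx _); lra.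
apply: le_trans (lerXn2r T _ _ h1) _; rewrite ?nnegrE ?expR_ge0 //; first by lra.
rewrite -expRM_natl -[X in _ <= X](@lnK _ Delta) ?posrE // ler_expR.
by move: HT; rewrite div1r lnV ?posrE //; lra.
Qed.

Lemma prob_hashesT (R : realType) (m n T : nat) (f : R) :
  prob_hashes m n T f predT = 1.
Proof. by rewrite /prob_hashes (sum_prod_trials T (hash_weight m n f)) sum_hash_weight expr1n. Qed.

Lemma prob_hashesC (R : realType) (m n T : nat) (f : R) (E : pred {ffun 'I_T -> hashT m n}) :
  prob_hashes m n T f E = 1 - prob_hashes m n T f (predC E).
Proof. by rewrite -(prob_hashesT m n T f) /prob_hashes (bigID E predT) addrK. Qed.

Lemma prob_hashes_le (R : realType) (m n T : nat) (f : R) (E E' : pred {ffun 'I_T -> hashT m n}) :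
  0 <= f -> f <= 1 / 2 -> {subset E <= E'} ->
  prob_hashes m n T f E <= prob_hashes m n T f E'.
Proof.
move=> f0 f12 EE'; rewrite /prob_hashes [X in _ <= X](bigID E) /= -[X in X <= _]addr0.
rewrite (eq_bigl E) => [|hs]; last by apply/andb_idl/EE'.
by rewrite lerD2l sumr_ge0 // => hs _; apply: prodr_ge0 => t _; exact: hash_weight_ge0.
Qed.

Lemma UboundP (R : realType) (n m : nat) (f : R) u :
  Ubound n m f = Some u -> (1 <= u)%N /\ Ucond n m f u.
Proof.
rewrite /Ubound; case E: [seq z <- iota 1 (2 ^ n) | Ucond n m f z] => [|z s] //= [<-].
have : z \in [seq z <- iota 1 (2 ^ n) | Ucond n m f z] by rewrite E mem_head.
by rewrite mem_filter mem_iota => /andP[-> /andP[-> _]].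
Qed.

Lemma card_bvec_set_le (n : nat) (S : {set bvec n}) : (#|S| <= 2 ^ n)%N.
Proof. by apply: leq_trans (max_card _) _; rewrite card_ffun card_bool card_ord. Qed.

Lemma estimator_fail_majority (R : realType) (n m T : nat) (f : R) (S : {set bvec n}) hs :
  ~~ le_opt #|S| (estimator n m T f S hs) ->
  median_is_one (fun t => cell_count S (hs t) == 0%N) /\
  exists2 u, Ubound n m f = Some u & (u < #|S|)%N.
Proof.
rewrite /estimator; case: ifP => [med|_]; last by rewrite /= card_bvec_set_le.
by case: (Ubound n m f) => [u|] //= Su; split=> //; exists u; rewrite // ltnNge.
Qed.

Unset Implicit Arguments.
Theorem theorem4 (R : realType) (n m T : nat) (f Delta : R)
    (S : {set bvec n}) :
  (1 <= m)%N -> (m <= n)%N ->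
  0 <= f -> f <= 1 / 2 ->
  0 < Delta -> Delta < 1 ->
  24%:R * ln (1 / Delta) <= T%:R ->
  1 - Delta <= prob_hashes m n T f
                 (fun hs => le_opt #|S| (estimator n m T f S hs)).
Proof.
move=> _ _ f0 f12 D0 _ HT.
rewrite prob_hashesC lerD2l lerN2.
have [[u /UboundP[u1 Uu] uS] | noU] :=
  pselect (exists2 u, Ubound n m f = Some u & (u < #|S|)%N); last first.
  rewrite /prob_hashes big_pred0 ?ltW // => hs /=.
  by apply/negbTE; rewrite negbK; apply: contraT => /estimator_fail_majority[_].
have S1 : (1 <= #|S|)%N := leq_trans u1 (ltnW uS).
have empty_cell := prob_empty_cell_le f0 f12 S1 (Ucond_upward f0 f12 u1 (ltnW uS) Uu).
apply: le_trans (seven_eighths_pow_le D0 HT).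
apply: le_trans (prob_majority_le T (hash_weight_ge0 f0 f12) (sum_hash_weight m n f) empty_cell).
by apply: prob_hashes_le => // hs /estimator_fail_majority[].
Qed.
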